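(* Fix a static program and its associated dimension function $\#$. For every expression $e$ with $\#(e)=\top$ and every expression context $C[\cdot]$, we have $\#(C[e])=\top$. That is, any expression containing an inconsistently-dimensioned subexpression is itself inconsistently-dimensioned.
   Context: Expressions: fix countable sets of variables $\mathbb{X}$, procedure names $\mathbb{F}$, primitive names $\Pi$, handles $\mathbb{H}$, and a set of values $\mathbb{C}$. Expressions are $e ::= x_h \mid c_h \mid [\mathrm{let}_h\,x_1\dots x_n \text{ be } e \text{ in } e] \mid [\mathrm{call}_h\,f\ e_1\dots e_n] \mid [\mathrm{primitive}_h\,\pi\ e_1\dots e_n] \mid [\mathrm{if}_h\,e\in\{c_1,\dots,c_n\}\text{ then } e \text{ else } e] \mid [\mathrm{fork}_h\,f\ e_1\dots e_n] \mid [\mathrm{join}_h\,e] \mid [\mathrm{bundle}_h\,e_1\dots e_n]$ ($n\ge0$), with handles pairwise distinct. An expression context $C[\cdot]$ is an expression with a single hole occurring in a subexpression position (possibly the whole expression). A program consists of a procedure environment (a finite map from procedure names $f$ to formals $x_1\dots x_n$ and a body expression), a primitive environment in which each primitive $\pi$ has an in-dimension $n$ and out-dimension $m$ (written $\pi:_\# n\to m$), and a main expression. Dimension lattice: $\mathbb{N}_\bot^\top=\{\bot,\top\}\cup\{\uparrow n: n\in\mathbb{N}\}$ with the flat order $\bot\sqsubset\uparrow n\sqsubset\top$ (distinct $\uparrow n$ incomparable), join $\sqcup$; $\mathbb{N}_\bot=\mathbb{N}_\bot^\top\setminus\{\top\}$. The relation $e:_\# d$ ($d\in\mathbb{N}_\bot$)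 and procedure dimensions $f:_\# n\to d$ are defined mutually recursively: $x_h:_\#\uparrow1$; $c_h:_\#\uparrow1$; $[\mathrm{bundle}_{h_0}e_1..e_n]:_\#\uparrow n$ if $e_i:_\# d_i$ with $d_i\sqsubseteq\uparrow1$ for all $i$; $[\mathrm{let}_{h_0}x_1..x_n\text{ be }e_1\text{ in }e_2]:_\# d_2$ if $e_1:_\# d_1$, $e_2:_\# d_2$, $d_1\sqsubseteq\uparrow m$ for some $m\ge n$ and $d_2\sqsubset\top$; $[\mathrm{primitive}_{h_0}\pi\,e_1..e_n]:_\#\uparrow m$ if $\pi:_\# n\to m$ and $e_i:_\# d_i\sqsubseteq\uparrow1$ for all $i$; $[\mathrm{call}_{h_0}f\,e_1..e_n]:_\# d$ if $f:_\# n\to d$, $e_i:_\# d_i\sqsubseteq\uparrow1$ for all $i$, and $d\sqsubset\top$; $[\mathrm{if}_{h_0}e_1\in\{c_1..c_n\}\text{ then }e_2\text{ else }e_3]:_\# d$ if $e_j:_\# d_j$ ($j=1,2,3$), $d_1\sqsubseteq\uparrow1$, $d=d_2\sqcup d_3$ and $d\sqsubset\top$; $[\mathrm{fork}_{h_0}f\,e_1..e_n]:_\#\uparrow1$ if $f:_\# n\to d$ with $d\sqsubseteq\uparrow1$ and $e_i:_\# d_i\sqsubseteq\uparrow1$ for all $i$; $[\mathrm{join}_{h_0}e_1]:_\#\uparrow1$ if $e_1:_\# d_1\sqsubseteq\uparrow1$. For each procedure $f$ of the program with formals $x_1..x_n$ and body $b$, $f:_\# n\to d$ where $d$ is the least fixpoint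 such that $\#(b)=d$. Finally $\#:\text{Expressions}\to\mathbb{N}_\bot^\top$ is the total extension of $:_\#$, returning $\top$ where $:_\#$ is undefined. An expression $e$ is inconsistently-dimensioned if $\#(e)=\top$. *)

From Stdlib Require Import List Arith.
Import ListNotations.

Set Implicit Arguments.

Inductive dim : Type := Bot | Up (n : nat) | Top.

Definition dle (a b : dim) : Prop :=
  match a, b with
  | Bot, _ => True
  | Up n, Up m => n = m
  | Up _, Top => True
  | Top, Top => True
  | _, _ => False
  end.

Definition dlt (a b : dim) : Prop := dle a b /\ a <> b.

Definition djoin (a b : dim) : dim :=
  match a, b with
  | Bot, d => d
  | d, Bot => d
  | Up n, Up m => if Nat.eqb n m then Up n else Top
  | _, _ => Top
  end.

Section Syntax.
Variables (X F Pi H C : Type).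
(* X: variables, F: procedure names, Pi: primitive names, H: handles,
   C: values *)

Inductive expr : Type :=
| EVar (h : H) (x : X)
| EConst (h : H) (c : C)
| ELet (h : H) (xs : list X) (e1 e2 : expr)
| ECall (h : H) (f : F) (es : list expr)
| EPrim (h : H) (p : Pi) (es : list expr)
| EIf (h : H) (e1 : expr) (cs : list C) (e2 e3 : expr)
| EFork (h : H) (f : F) (es : list expr)
| EJoin (h : H) (e : expr)
| EBundle (h : H) (es : list expr).

Fixpoint handles (e : expr) : list H :=
  match e with
  | EVar h _ | EConst h _ => [h]
  | ELet h _ e1 e2 => h :: handles e1 ++ handles e2
  | ECall h _ es | EPrim h _ es | EFork h _ es | EBundle h es =>
      h :: flat_map handles es
  | EIf h e1 _ e2 e3 => h :: handles e1 ++ handles e2 ++ handles e3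
  | EJoin h e1 => h :: handles e1
  end.

Definition wf_expr (e : expr) : Prop := NoDup (handles e).

Inductive ctx : Type :=
| Hole
| CLet1 (h : H) (xs : list X) (c : ctx) (e2 : expr)
| CLet2 (h : H) (xs : list X) (e1 : expr) (c : ctx)
| CCall (h : H) (f : F) (l : list expr) (c : ctx) (r : list expr)
| CPrim (h : H) (p : Pi) (l : list expr) (c : ctx) (r : list expr)
| CIf1 (h : H) (c : ctx) (cs : list C) (e2 e3 : expr)
| CIf2 (h : H) (e1 : expr) (cs : list C) (c : ctx) (e3 : expr)
| CIf3 (h : H) (e1 : expr) (cs : list C) (e2 : expr) (c : ctx)
| CFork (h : H) (f : F) (l : list expr) (c : ctx) (r : list expr)
| CJoin (h : H) (c : ctx)
| CBundle (h : H) (l : list expr) (c : ctx) (r : list expr).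

Fixpoint plug (c : ctx) (e : expr) : expr :=
  match c with
  | Hole => e
  | CLet1 h xs c' e2 => ELet h xs (plug c' e) e2
  | CLet2 h xs e1 c' => ELet h xs e1 (plug c' e)
  | CCall h f l c' r => ECall h f (l ++ plug c' e :: r)
  | CPrim h p l c' r => EPrim h p (l ++ plug c' e :: r)
  | CIf1 h c' cs e2 e3 => EIf h (plug c' e) cs e2 e3
  | CIf2 h e1 cs c' e3 => EIf h e1 cs (plug c' e) e3
  | CIf3 h e1 cs e2 c' => EIf h e1 cs e2 (plug c' e)
  | CFork h f l c' r => EFork h f (l ++ plug c' e :: r)
  | CJoin h c' => EJoin h (plug c' e)
  | CBundle h l c' r => EBundle h (l ++ plug c' e :: r)
  end.

Record program : Type := {
  (* procedure environment: f |-> (formals, body) *)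
  procs : F -> option (list X * expr);
  (* primitive environment: pi :_# n -> m *)
  prims : Pi -> nat * nat;
  main : expr
}.

Definition program_ok (P : program) : Prop :=
  (exists l : list F, forall f, procs P f <> None -> In f l) /\
  (forall f xs b, procs P f = Some (xs, b) -> wf_expr b) /\
  wf_expr (main P).

(** * The relation e :_# d, relative to an assignment rho of dimensions to
    procedures: f :_# n -> d  iff  f has n formals and rho f = d. *)
Section Dim.
Variables (P : program) (rho : F -> dim).

Definition proc_dim (f : F) (n : nat) (d : dim) : Prop :=
  exists xs b, procs P f = Some (xs, b) /\ length xs = n /\ rho f = d.

Inductive has_dim : expr -> dim -> Prop :=
| HD_var h x : has_dim (EVar h x) (Up 1)
| HD_const h c : has_dim (EConst h c) (Up 1)
| HD_bundle h es :
    Forall (fun e => exists d, has_dim e d /\ dle d (Up 1)) es ->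
    has_dim (EBundle h es) (Up (length es))
| HD_let h xs e1 e2 d1 d2 :
    has_dim e1 d1 -> has_dim e2 d2 ->
    (exists m, length xs <= m /\ dle d1 (Up m)) ->
    dlt d2 Top ->
    has_dim (ELet h xs e1 e2) d2
| HD_prim h p es m :
    prims P p = (length es, m) ->
    Forall (fun e => exists d, has_dim e d /\ dle d (Up 1)) es ->
    has_dim (EPrim h p es) (Up m)
| HD_call h f es d :
    proc_dim f (length es) d ->
    Forall (fun e => exists d', has_dim e d' /\ dle d' (Up 1)) es ->
    dlt d Top ->
    has_dim (ECall h f es) d
| HD_if h e1 cs e2 e3 d1 d2 d3 :
    has_dim e1 d1 -> has_dim e2 d2 -> has_dim e3 d3 ->
    dle d1 (Up 1) ->
    dlt (djoin d2 d3) Top ->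
    has_dim (EIf h e1 cs e2 e3) (djoin d2 d3)
| HD_fork h f es d :
    proc_dim f (length es) d ->
    dle d (Up 1) ->
    Forall (fun e => exists d', has_dim e d' /\ dle d' (Up 1)) es ->
    has_dim (EFork h f es) (Up 1)
| HD_join h e1 d1 :
    has_dim e1 d1 -> dle d1 (Up 1) ->
    has_dim (EJoin h e1) (Up 1).

(** # : total extension of :_#, returning Top where :_# is undefined *)
Definition sharp (e : expr) (d : dim) : Prop :=
  (dlt d Top /\ has_dim e d) \/ (d = Top /\ ~ exists d', has_dim e d').

End Dim.

Definition proc_fixpoint (P : program) (rho : F -> dim) : Prop :=
  forall f xs b, procs P f = Some (xs, b) -> sharp P rho b (rho f).

Definition least_proc_fixpoint (P : program) (rho : F -> dim) : Prop :=
  proc_fixpoint P rho /\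
  forall rho', proc_fixpoint P rho' ->
    forall f, procs P f <> None -> dle (rho f) (rho' f).

End Syntax.

(* Every rule of e :_# d requires each immediate subexpression to carry some
   dimension, so a derivation of a dimension for C[e] contains one for e. *)
From Stdlib Require Import List.

Lemma Forall_elt {A : Type} {Q : A -> Prop} {l r : list A} {x : A} :
  Forall Q (l ++ x :: r) -> Q x.
Proof.
  intro HQ. exact (proj1 (Forall_forall Q _) HQ x (in_elt x l r)).
Qed.

Section Dimensions.
Variables (X F Pi H C : Type) (P : program X F Pi H C) (rho : F -> dim).

Lemma sharp_Top (e : expr X F Pi H C) :
  sharp P rho e Top <-> ~ exists d, has_dim P rho e d.
Proof.
  split.
  - intros [[[_ Hneq] _] | [_ Hnone]]; [congruence | exact Hnone].
  - intro Hnone. right. split; [reflexivity | exact Hnone].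
Qed.

Lemma has_dim_plug_inv {c : ctx X F Pi H C} {e : expr X F Pi H C} {d : dim} :
  has_dim P rho (plug c e) d -> exists d', has_dim P rho e d'.
Proof.
  induction c in d |- *; intro Hd; simpl in Hd; [now exists d |..];
    inversion Hd; subst; eauto;
    match goal with
    | Hargs : Forall _ (_ ++ _ :: _) |- _ =>
        destruct (Forall_elt Hargs) as [? [? _]]; eauto
    end.
Qed.

End Dimensions.

Theorem mainTheorem2 (X F Pi H C : Type) (P : program X F Pi H C)
  (rho : F -> dim) :
  program_ok P ->
  least_proc_fixpoint P rho ->
  forall (e : expr X F Pi H C) (c : ctx X F Pi H C),
    wf_expr (plug c e) ->
    sharp P rho e Top ->
    sharp P rho (plug c e) Top.
Proof.
  intros _ _ e c _ He.
  apply sharp_Top in He. apply sharp_Top.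
  intros [d Hd]. eapply He, has_dim_plug_inv, Hd.
Qed.
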